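(* Let $\gamma:[0,1]\to\mathbb{R}_+$ be a differentiable increasing function with $\gamma(x)>0$ for $x>0$, and assume $\lim_{x\downarrow0}x\gamma'(x)/\gamma(x)=0$. Then $$\lim_{x\downarrow0}\frac{1}{\gamma(x)}\int_0^{1/2}\gamma(xy)\frac{dy}{y\sqrt{\log(1/y)}}=\infty .$$ *)

From HB Require Import structures.
From mathcomp Require Import all_boot all_order all_algebra.
From mathcomp Require Import all_classical all_reals all_analysis.
Set Implicit Arguments. Unset Strict Implicit. Unset Printing Implicit Defensive.
Import Order.TTheory GRing.Theory Num.Theory.
Import numFieldNormedType.Exports.
Local Open Scope classical_set_scope.
Local Open Scope ring_scope.

Definition differentiable_on_01 {R : realType} (g : R -> R) : Prop :=
  [/\ {in `]0, 1[, forall x, derivable g x 1},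
      cvg ((fun h => (g h - g 0) / h) @ 0^'+) &
      cvg ((fun h => (g h - g 1) / (h - 1)) @ 1^'-)].

From HB Require Import structures.
From mathcomp Require Import all_boot all_order all_algebra.
From mathcomp Require Import all_classical all_reals all_analysis.
From mathcomp Require Import ring lra.
Import Order.TTheory GRing.Theory Num.Theory.
Import numFieldNormedType.Exports.
Local Open Scope classical_set_scope.
Local Open Scope ring_scope.

(* Since x gamma'(x) / gamma(x) -> 0, the mean value theorem gives
   gamma(a x) >= gamma(x) / 2 for every fixed a in (0, 1) once x is small.
   Take a = exp(-s^2): on [a, 1/2] the weight 1 / (y sqrt(ln (1/y))) is at
   least 1 / (s y), so the integral is at least
   gamma(a x) / s * (ln (1/2) - ln a) >= gamma(x) (s^2 - ln 2) / (2 s),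
   and s can be taken as large as we please. *)

(* No measurability is needed: both integrals are suprema over nonnegative
   simple functions, and those below g on D' extend by 0 to ones below f on D. *)
Lemma ge0_le_integral_subset d (T : measurableType d) (R : realType)
    (mu : {measure set T -> \bar R}) (D D' : set T) (f g : T -> \bar R) :
  D' `<=` D -> (forall x, D x -> (0 <= f x)%E) ->
  (forall x, D' x -> (0 <= g x)%E) -> (forall x, D' x -> (g x <= f x)%E) ->
  (\int[mu]_(x in D') g x <= \int[mu]_(x in D) f x)%E.
Proof.
move=> D'D f_ge0 g_ge0 gf; rewrite !ge0_integralE//.
apply: ereal_sup_le => _ [h hg <-]; exists h => // x.
apply: le_trans (hg x) _; rewrite /patch.
case: ifPn => [/[!inE] D'x|_]; first by rewrite ifT ?inE; [exact: gf | exact: D'D].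
by case: ifPn => [/[!inE] /f_ge0|].
Qed.

Lemma integral_itv_cst_divx (R : realType) (c a b : R) : 0 < a -> a < b ->
  (\int[lebesgue_measure]_(y in `[a, b]) (c / y)%:E = (c * (ln b - ln a))%:E)%E.
Proof.
move=> a_gt0 ab.
pose F y := c * @ln R y.
have F'E (y : R) : 0 < y -> is_derive y 1 F (c / y).
  by move=> y_gt0; apply: is_deriveZ; exact: is_derive1_ln.
have F_cont (y : R) : 0 < y -> {for y, continuous F}.
  by move=> y_gt0; apply: continuousM; [exact: cst_continuous | exact: continuous_ln].
rewrite (@continuous_FTC2 _ _ F) // -?EFinB -?mulrBr //.
- apply: continuous_in_subspaceT => y; rewrite inE /= in_itv /= => /andP[ay _].
  apply: continuousM; first exact: cst_continuous.
  by apply: inv_continuous; rewrite gt_eqF// (lt_le_trans a_gt0).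
- split.
  + move=> y /[!in_itv] /= /andP[ay _].
    by apply: ex_derive; apply: F'E; exact: lt_trans ay.
  + by apply: cvg_at_right_filter; apply: F_cont.
  + by apply: cvg_at_left_filter; apply: F_cont; exact: lt_trans ab.
- move=> y /[!in_itv] /= /andP[ay _].
  by rewrite derive1E (derive_val (is_derive := F'E y (lt_trans a_gt0 ay))).
Qed.

Lemma near_right0_forall_le (R : realType) (P : R -> Prop) :
  (\forall t \near 0^'+, P t) -> \forall x \near 0^'+, forall t, 0 < t <= x -> P t.
Proof.
move=> /nbhs_ballP[d /= d_gt0 Pd]; near=> x => t /andP[t_gt0 tx].
have x_lt_d : x < d by near: x; exact: nbhs_right_lt.
apply: Pd => //; rewrite /ball /= sub0r normrN gtr0_norm// (le_lt_trans tx).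
Unshelve. all: by end_near. Qed.

Lemma expR_sqr_gt2 (R : realType) (s : R) : 1 < s -> 2 < expR (s ^+ 2).
Proof. by move=> s_gt1; apply: lt_le_trans (expR_ge1Dx _); nra. Qed.

Section slowly_varying.
Context {R : realType} {g : R -> R}.
Hypothesis g_derivable : {in `]0, 1[, forall x, derivable g x 1}.
Hypothesis g_homo : {in `[0, 1] &, {homo g : x y / x <= y}}.
Hypothesis g_ge0 : forall x, 0 <= x <= 1 -> 0 <= g x.
Hypothesis g_gt0 : forall x, 0 < x <= 1 -> 0 < g x.

Lemma near0_elasticity_le (eps : R) : 0 < eps ->
  (fun x => x * derive1 g x / g x) @ 0^'+ --> 0 ->
  \forall x \near 0^'+, forall t, 0 < t <= x -> t * derive1 g t <= eps * g t.
Proof.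
move=> eps_gt0 /cvgrPdist_lt/(_ eps eps_gt0) close.
apply: near_right0_forall_le; near=> t.
have gt_gt0 : 0 < g t.
  by apply: g_gt0; apply/andP; split; [|apply: ltW]; near: t;
    [exact: nbhs_right_gt | exact: nbhs_right_lt].
rewrite -ler_pdivrMr //; apply: ltW; apply: le_lt_trans (ler_norm _) _.
by rewrite -normrN -sub0r; near: t.
Unshelve. all: by end_near. Qed.

Lemma sub_scale_le (eps a x : R) : 0 <= eps -> 0 < a < 1 -> 0 < x < 1 ->
  (forall t, a * x < t < x -> t * derive1 g t <= eps * g t) ->
  g x - g (a * x) <= eps / a * g x.
Proof.
move=> eps_ge0 /andP[a_gt0 a_lt1] /andP[x_gt0 x_lt1] elasticity.
have ax_lt_x : a * x < x by rewrite gtr_pMl.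
have ax_gt0 : 0 < a * x by rewrite mulr_gt0.
have in01 t : a * x <= t <= x -> t \in `]0, 1[.
  by move=> /andP[axt tx]; rewrite in_itv /= (lt_le_trans ax_gt0) ?(le_lt_trans tx).
have g_cont : {within `[a * x, x], continuous g}.
  by apply: derivable_within_continuous => t /[!in_itv] /in01 /g_derivable.
have g_deriv t : t \in `]a * x, x[ -> is_derive t 1 g (derive1 g t).
  move=> /[!in_itv] /= /andP[axt tx]; rewrite derive1E; apply: derivableP.
  by apply/g_derivable/in01; rewrite !ltW.
have [c /[!in_itv] /= /andP[axc cx] ->] := MVT ax_lt_x g_deriv g_cont.
have c_gt0 : 0 < c := lt_trans ax_gt0 axc.
have gx_ge0 : 0 <= g x by apply: g_ge0; rewrite ltW // ltW.
have cg'c_le : c * derive1 g c <= eps * g x.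
  apply: le_trans (elasticity c _) _; first by rewrite axc.
  by rewrite ler_wpM2l // g_homo ?in_itv /= ?ltW // ?(lt_trans c_gt0) ?(lt_trans cx).
have -> : derive1 g c * (x - a * x) = c * derive1 g c * ((x - a * x) / c).
  by field; rewrite gt_eqF.
apply: le_trans (ler_wpM2r _ cg'c_le) _.
  by rewrite divr_ge0 ?subr_ge0 ?ltW.
rewrite mulrAC; apply: ler_wpM2r => //; apply: ler_wpM2l => //.
by rewrite ler_pdivrMr // [a^-1 * c]mulrC ler_pdivlMr //; nra.
Qed.

Lemma half_le_scale (a x : R) : 0 < a < 1 -> 0 < x < 1 ->
  (forall t, 0 < t <= x -> t * derive1 g t <= a / 2 * g t) ->
  g x / 2 <= g (x * a).
Proof.
move=> a01 x01 elasticity; have /andP[a_gt0 _] := a01; have /andP[x_gt0 _] := x01.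
have eps_ge0 : 0 <= a / 2 by rewrite divr_ge0 ?ltW.
have sub_le : g x - g (a * x) <= a / 2 / a * g x.
  apply: (sub_scale_le _ _ _ eps_ge0 a01 x01) => t /andP[axt tx].
  by apply: elasticity; rewrite (lt_trans _ axt) ?mulr_gt0 // ltW.
by move: sub_le; rewrite [a / 2 / a]mulrAC divff ?gt_eqF // mul1r [a * x]mulrC; lra.
Qed.

Lemma integrand_ge (s x y : R) : 0 < s -> 0 < x <= 1 ->
  expR (- s ^+ 2) <= y <= 2^-1 ->
  g (x * expR (- s ^+ 2)) / s / y <= g (x * y) / (y * Num.sqrt (ln y^-1)).
Proof.
set a := expR _ => s_gt0 /andP[x_gt0 x_le1] /andP[ay y_le_half].
have a_gt0 : 0 < a := expR_gt0 _.
have y_gt0 : 0 < y := lt_le_trans a_gt0 ay.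
have ln_invy_gt0 : 0 < ln y^-1 by rewrite ln_gt0 // invf_gt1 //; lra.
have sqrt_le_s : Num.sqrt (ln y^-1) <= s.
  rewrite -[s]ger0_norm; last exact: ltW.
  rewrite -sqrtr_sqr ler_sqrt ?sqr_ge0 //.
  by rewrite -[s ^+ 2]opprK -(expRK (- s ^+ 2)) -lnV ?posrE // ler_ln ?posrE ?invr_gt0 // lef_pV2.
have in01 z : 0 < z <= 2^-1 -> 0 <= x * z <= 1.
  by move=> /andP[z_gt0 z_le]; rewrite mulr_ge0 ?ltW //=; nra.
rewrite -mulrA -invfM; apply: ler_pM.
- by apply/g_ge0/in01; rewrite a_gt0 (le_trans ay).
- by rewrite invr_ge0 mulr_ge0 ?ltW.
- apply: g_homo; rewrite ?in_itv /= ?in01 ?a_gt0 ?y_gt0 ?(le_trans ay) //.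
  by rewrite ler_pM2l.
- by rewrite lef_pV2 ?posrE ?mulr_gt0 ?sqrtr_gt0 // mulrC ler_pM2r.
Qed.

Lemma integral_ge (s x : R) : 1 < s -> 0 < x <= 1 ->
  ((g (x * expR (- s ^+ 2)) / s * (s ^+ 2 - ln 2))%:E <=
   \int[lebesgue_measure]_(y in `]0%R, (2^-1)%R])
     (g (x * y) / (y * Num.sqrt (ln y^-1)))%:E)%E.
Proof.
set a := expR _ => s_gt1 /andP[x_gt0 x_le1].
have a_gt0 : 0 < a := expR_gt0 _.
have s_gt0 : 0 < s := lt_trans ltr01 s_gt1.
have a_lt_half : a < 2^-1.
  by rewrite /a expRN ltf_pV2 ?posrE ?expR_gt0 // expR_sqr_gt2.
have gxy_ge0 y : 0 < y <= 2^-1 -> 0 <= g (x * y).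
  by move=> /andP[y_gt0 y_le]; apply: g_ge0; rewrite mulr_ge0 ?ltW //=; nra.
have -> : s ^+ 2 - ln 2 = ln 2^-1 - ln a by rewrite lnV ?posrE // expRK; lra.
rewrite -integral_itv_cst_divx //; apply: ge0_le_integral_subset.
- by move=> y /=; rewrite !in_itv /= => /andP[/(lt_le_trans a_gt0) -> ->].
- move=> y /=; rewrite in_itv /= => /andP[y_gt0 y_le]; rewrite lee_fin.
  by rewrite divr_ge0 ?gxy_ge0 ?y_gt0 // mulr_ge0 ?sqrtr_ge0 // ltW.
- move=> y /=; rewrite in_itv /= => /andP[ay y_le]; rewrite lee_fin.
  have y_gt0 := lt_le_trans a_gt0 ay.
  by rewrite !divr_ge0 ?gxy_ge0 ?a_gt0 ?(ltW a_lt_half) // ltW.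
- move=> y /=; rewrite in_itv /= => ay_le; rewrite lee_fin.
  by apply: integrand_ge => //; rewrite x_gt0.
Qed.

Lemma ratio_integral_ge (s x : R) : 1 < s -> 0 < x <= 1 ->
  g x / 2 <= g (x * expR (- s ^+ 2)) ->
  (((s ^+ 2 - ln 2) / (2 * s))%:E <= ((g x)^-1)%:E *
   \int[lebesgue_measure]_(y in `]0%R, (2^-1)%R])
     (g (x * y) / (y * Num.sqrt (ln y^-1)))%:E)%E.
Proof.
move=> s_gt1 x01 half_le; have gx_gt0 := g_gt0 _ x01.
have s_gt0 : 0 < s := lt_trans ltr01 s_gt1.
apply: le_trans (lee_wpmul2l _ (integral_ge _ _ s_gt1 x01)) => /=; last first.
  by rewrite lee_fin invr_ge0 ltW.
have ln2_lt : ln 2 < s ^+ 2 by rewrite -ltr_expR lnK ?posrE ?expR_sqr_gt2.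
rewrite -EFinM lee_fin.
set H := g (x * _); set Y := s ^+ 2 - ln 2.
rewrite (_ : (g x)^-1 * _ = 2 * ((g x)^-1 * H) * (Y / (2 * s))); last first.
  by field; rewrite !gt_eqF.
have Y_ge0 : 0 <= Y / (2 * s) by rewrite divr_ge0 ?mulr_ge0 ?(ltW s_gt0) // subr_ge0 ltW.
rewrite ler_peMl // [_ * H]mulrC mulrA ler_pdivlMr // /H; lra.
Qed.

End slowly_varying.

Theorem proposition2p10 (R : realType) (gamma : R -> R) :
  differentiable_on_01 gamma ->
  {in `[0, 1] &, {homo gamma : x y / x <= y}} ->
  (forall x, 0 <= x <= 1 -> 0 <= gamma x) ->
  (forall x, 0 < x <= 1 -> 0 < gamma x) ->
  (fun x => x * derive1 gamma x / gamma x) @ 0^'+ --> 0 ->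
  (fun x => ((gamma x)^-1)%:E *
     (\int[lebesgue_measure]_(y in `]0%R, (2^-1)%R])
        ((gamma (x * y)) / (y * Num.sqrt (ln y^-1)))%:E))%E
    @ 0^'+ --> +oo%E.
Proof.
move=> [g_derivable _ _] g_homo g_ge0 g_gt0 elasticity_cvg0.
apply/cvgeyPge => A.
pose s := 2 * `|A| + 3; pose a := expR (- s ^+ 2).
have s_gt1 : 1 < s by rewrite /s; have := normr_ge0 A; lra.
have s_gt0 : 0 < s := lt_trans ltr01 s_gt1.
have a01 : 0 < a < 1 by rewrite expR_gt0 expR_lt1 oppr_lt0 exprn_gt0.
have A_le : A <= (s ^+ 2 - ln 2) / (2 * s).
  rewrite ler_pdivlMr ?mulr_gt0 // /s.
  have := ln_sublinear (ltr0n R 2); have := ler_norm A; have := normr_ge0 A; nra.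
have small_elasticity : \forall x \near 0^'+,
    forall t, 0 < t <= x -> t * derive1 gamma t <= a / 2 * gamma t.
  by apply: (near0_elasticity_le g_gt0) => //; case/andP: a01 => a_gt0 _; rewrite divr_gt0.
near=> x.
have x01 : 0 < x < 1.
  by apply/andP; split; near: x; [exact: nbhs_right_gt | exact: nbhs_right_lt].
apply: le_trans (ratio_integral_ge g_homo g_ge0 g_gt0 _ _ s_gt1 _ _).
- by rewrite lee_fin.
- by case/andP: x01 => -> /ltW ->.
- apply: (half_le_scale g_derivable g_homo g_ge0 _ _ a01 x01).
  exact: (near small_elasticity x).
Unshelve. all: by end_near. Qed.
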